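(* Let $G$ and $K$ be finite sets, let $\beta:G\rightarrow K$ be a surjective function, let $U\subseteq\Lambda^G$ be such that $\Xi_\beta(U)=\Lambda^K$, and let $f:G\rightarrow\mathbb R^+$ and $f^*:K\rightarrow\mathbb R^+$ be such that $f$ is thematically mean invariant with respect to $f^*$ on $U$ under $\beta$, i.e. for all $p\in U$ and all $k\in K$, $\mathcal E_f(\mathcal C_\beta(p,k))=f^*(k)$. Then for every $p\in U$, \[\Xi_\beta(\mathcal S_f p)=\mathcal S_{f^*}(\Xi_\beta p).\]
   Context: $\mathbb R^+$ denotes the positive reals. For a set $X$, $\Lambda^X$ is the set of functions $p:X\rightarrow[0,1]$ with $\sum_{x\in X}p(x)=1$. For $\beta:G\rightarrow K$ and $k\in K$, $\langle k\rangle_\beta=\{x\in G\mid \beta(x)=k\}$, and $\Xi_\beta:\Lambda^G\rightarrow\Lambda^K$ is $(\Xi_\beta p)(k)=\sum_{x\in\langle k\rangle_\beta}p(x)$; $\Xi_\beta(U)=\{\Xi_\beta p\mid p\in U\}$. For a finite set $X$ and $f:X\rightarrow\mathbb R^+$, $\mathcal E_f(p)=\sum_{x\in X}f(x)p(x)$ (defined also for the zero function $p$), and $\mathcal S_f:\Lambda^X\rightarrow\Lambda^X$ is $(\mathcal S_fp)(x)=f(x)p(x)/\mathcal E_f(p)$. For $p\in\Lambda^G$ and $k\in K$, $\mathcal C_\beta(p,k):G\rightarrow[0,1]$ is given by $(\mathcal C_\beta(p,k))(x)=p(x)/(\Xi_\beta p)(k)$ if $\beta(x)=k$ and $(\Xi_\beta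 p)(k)>0$, and $0$ otherwise. *)

From mathcomp Require Import all_boot all_order all_algebra.
From mathcomp Require Import reals.
Set Implicit Arguments. Unset Strict Implicit. Unset Printing Implicit Defensive.
Import Order.TTheory GRing.Theory Num.Theory.
Local Open Scope ring_scope.

Section Defs.
Variable R : realType.

Definition Lambda (X : finType) (p : X -> R) : Prop :=
  (forall x, 0 <= p x <= 1) /\ \sum_(x : X) p x = 1.

Definition Xi (G K : finType) (beta : G -> K) (p : G -> R) : K -> R :=
  fun k => \sum_(x : G | beta x == k) p x.

Definition Ef (X : finType) (f : X -> R) (p : X -> R) : R :=
  \sum_(x : X) f x * p x.

Definition Sf (X : finType) (f : X -> R) (p : X -> R) : X -> R :=
  fun x => f x * p x / Ef f p.

Definition Cb (G K : finType) (beta : G -> K) (p : G -> R) (k : K) : G -> R :=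
  fun x => if (beta x == k) && (0 < Xi beta p k) then p x / Xi beta p k else 0.

End Defs.

From Stdlib Require Import FunctionalExtensionality.
From mathcomp Require Import all_boot all_order all_algebra.
From mathcomp Require Import reals.
Import Order.TTheory GRing.Theory Num.Theory.
Local Open Scope ring_scope.

(* On each fibre of beta, the f-weighted mass of p equals the mass of the fibre
   times the conditional mean of f, which is fstar k by mean invariance.
   Summing over fibres gives E_f(p) = E_fstar(Xi p), so normalising commutes
   with Xi. *)

Section MeanInvariance.
Variables (R : realType) (G K : finType) (beta : G -> K).

Lemma Xi_mul_Cb (f p : G -> R) (k : K) :
  (forall x, 0 <= p x) ->
  Xi beta (fun x => f x * p x) k = Ef f (Cb beta p k) * Xi beta p k.
Proof.
move=> p_ge0; rewrite /Ef /Cb /=.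
have [Xi_gt0 | Xi_le0] := ltrP 0 (Xi beta p k).
  rewrite big_distrl /= /Xi big_mkcond /=.
  apply: eq_bigr => x _; rewrite andbT; case: (beta x == k).
    by rewrite mulrA divfK // gt_eqF.
  by rewrite mulr0 mul0r.
(* A null fibre has [Cb = 0]; nonnegativity is what forces p to vanish on it. *)
have Xi0 : Xi beta p k = 0 by apply/eqP; rewrite eq_le Xi_le0 sumr_ge0.
have fibre0 x : beta x == k -> p x = 0.
  move=> bxk; move/eqP: Xi0; rewrite psumr_eq0 // => /allP/(_ x (mem_index_enum x)).
  by rewrite bxk => /eqP.
by rewrite Xi0 mulr0; apply: big1 => x /fibre0 ->; rewrite mulr0.
Qed.

Lemma Ef_sum_Xi (f p : G -> R) :
  Ef f p = \sum_(k : K) Xi beta (fun x => f x * p x) k.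
Proof. exact: (partition_big beta predT). Qed.

Lemma Xi_Sf (f p : G -> R) (k : K) :
  Xi beta (Sf f p) k = Xi beta (fun x => f x * p x) k / Ef f p.
Proof. by rewrite /Xi big_distrl. Qed.

Lemma Xi_Sf_mean_invariant (f p : G -> R) (fstar : K -> R) :
  (forall x, 0 <= p x) -> (forall k, Ef f (Cb beta p k) = fstar k) ->
  Xi beta (Sf f p) = Sf fstar (Xi beta p).
Proof.
move=> p_ge0 f_inv.
have fibre k : Xi beta (fun x => f x * p x) k = fstar k * Xi beta p k.
  by rewrite Xi_mul_Cb // f_inv.
have Ef_Xi : Ef f p = Ef fstar (Xi beta p).
  by rewrite Ef_sum_Xi; apply: eq_bigr => k _; rewrite fibre.
by apply: functional_extensionality => k; rewrite Xi_Sf fibre Ef_Xi.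
Qed.

End MeanInvariance.

Theorem corollary1 (R : realType) (G K : finType) (beta : G -> K)
  (U : (G -> R) -> Prop) (f : G -> R) (fstar : K -> R)
  (hbeta : forall k : K, exists x : G, beta x = k)
  (hU : forall p, U p -> Lambda p)
  (hXiU : forall q : K -> R, (exists2 p, U p & Xi beta p = q) <-> Lambda q)
  (hf : forall x, 0 < f x) (hfstar : forall k, 0 < fstar k)
  (hinv : forall p, U p -> forall k : K, Ef f (Cb beta p k) = fstar k) :
  forall p, U p -> Xi beta (Sf f p) = Sf fstar (Xi beta p).
Proof.
move=> p Up; apply: Xi_Sf_mean_invariant; last exact: hinv.
by move=> x; have [/(_ x)/andP[]] := hU p Up.
Qed.
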